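(* Let $R\in(0,\infty)\setminus\{1\}$, $b_1>0$, $b_2>1$, $b_3>0$, and let $m,\ell,F$ be as in the context. For $q\in(0,1]$ and $(1-R)m(q)<(1-R)n<(1-R)\ell(q)$, and for $q>1$ and $(1-R)m(q)<(1-R)n$, we have $\frac{\partial}{\partial n}F(q,n)\le0$.
   Context: Define $m(q)=\frac{R(1-R)}{b_1}q^2-\frac{b_3(1-R)}{b_1}q+1$, $\ell(q)=m(q)+\frac{1-R}{b_1}q(1-q)+\frac{(b_2-1)R(1-R)}{b_1}\frac{q}{(1-R)q+R}$, $\varphi(q,n)=b_1(n-1)+(1-R)(b_3-2R)q+(2-b_2)R(1-R)$, $E(q)^2=4R^2(1-R)^2(b_2-1)(1-q)^2$, $O(q,n)=\frac{(1-R)n}{R(1-q)}-\frac{2(1-R)^2qn/R}{2(1-R)(1-q)[(1-R)q+R]-\varphi(q,n)-\mathrm{sgn}(1-R)\sqrt{\varphi(q,n)^2+E(q)^2}}$. Let $\mathcal{S}=\{q=1\}\cup\{q=\frac{R}{R-1}\}\cup\{n=0\}\cup\{q<1,(1-R)n\ge(1-R)\ell(q)\}$. On $(0,\infty)\times[0,\infty)\setminus\mathcal{S}$ define $F(q,n)=O(q,n)/n$, extended to $(0,\infty)\times[0,\infty)$ where possible by taking limits (in particular at $q=1$, at $q=R/(R-1)$ when $R>1$, and at $n=\ell(q)$ for $q>1$). *)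

From Stdlib Require Import Reals Lra ClassicalEpsilon.
From Coquelicot Require Import Coquelicot.
Open Scope R_scope.

(* The paper's parameter R is called Rp here (R is the type of reals). *)

Definition sgn (x : R) : R := if Rlt_dec 0 x then 1 else if Rlt_dec x 0 then -1 else 0.

Definition m_fun (Rp b1 b3 q : R) : R :=
  Rp * (1 - Rp) / b1 * q ^ 2 - b3 * (1 - Rp) / b1 * q + 1.

Definition l_fun (Rp b1 b2 b3 q : R) : R :=
  m_fun Rp b1 b3 q + (1 - Rp) / b1 * q * (1 - q)
  + (b2 - 1) * Rp * (1 - Rp) / b1 * (q / ((1 - Rp) * q + Rp)).

Definition phi_fun (Rp b1 b2 b3 q n : R) : R :=
  b1 * (n - 1) + (1 - Rp) * (b3 - 2 * Rp) * q + (2 - b2) * Rp * (1 - Rp).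

Definition E2_fun (Rp b2 q : R) : R :=
  4 * Rp ^ 2 * (1 - Rp) ^ 2 * (b2 - 1) * (1 - q) ^ 2.

Definition O_fun (Rp b1 b2 b3 q n : R) : R :=
  (1 - Rp) * n / (Rp * (1 - q))
  - (2 * (1 - Rp) ^ 2 * q * n / Rp)
    / (2 * (1 - Rp) * (1 - q) * ((1 - Rp) * q + Rp) - phi_fun Rp b1 b2 b3 q n
       - sgn (1 - Rp) * sqrt (phi_fun Rp b1 b2 b3 q n ^ 2 + E2_fun Rp b2 q)).

Definition in_S (Rp b1 b2 b3 q n : R) : Prop :=
  q = 1 \/ q = Rp / (Rp - 1) \/ n = 0 \/
  (q < 1 /\ (1 - Rp) * n >= (1 - Rp) * l_fun Rp b1 b2 b3 q).

Definition in_dom (q n : R) : Prop := 0 < q /\ 0 <= n.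

Definition F_raw (Rp b1 b2 b3 q n : R) : R := O_fun Rp b1 b2 b3 q n / n.

(* F extended by limits: on S, the limit of F_raw at (q,n) taken through points
   of the domain outside S, when such a limit exists (an arbitrary value,
   chosen by epsilon, otherwise). *)
Definition F_lim_at (Rp b1 b2 b3 q n l : R) : Prop :=
  filterlim (fun p : R * R => F_raw Rp b1 b2 b3 (fst p) (snd p))
    (within (fun p : R * R => in_dom (fst p) (snd p) /\ ~ in_S Rp b1 b2 b3 (fst p) (snd p))
       (locally (q, n)))
    (locally l).

Definition F_fun (Rp b1 b2 b3 q n : R) : R :=
  match excluded_middle_informative (in_S Rp b1 b2 b3 q n) with
  | left _ => epsilon (inhabits 0) (F_lim_at Rp b1 b2 b3 q n)
  | right _ => F_raw Rp b1 b2 b3 q n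
  end.

(* d is the partial derivative in n of f at (q,n), taken relative to the
   domain n' >= 0 (an ordinary derivative when n > 0, a right derivative at n = 0). *)
Definition is_partial_n (f : R -> R -> R) (q n d : R) : Prop :=
  filterlim (fun n' => (f q n' - f q n) / (n' - n))
    (within (fun n' => 0 <= n' /\ n' <> n) (locally n)) (locally d).

(* Rationalising the inner denominator of O by
     W = phi - sgn(1-R) sqrt(phi^2 + E^2),   where E^2 = K (1-q)^2,
   and cancelling the common factor 1-q shows that off S
     F = g(u) = (1-R)(2R(1-R) + u) / (R T(u)),   u = K / W,
     T(u) = 2(1-R)((1-R)q + R) + (1-q) u.
   This expression is continuous wherever W and T do not vanish, so it also
   gives the limits defining F on S.  Now g'(u) = 2(1-R)^2 q / (R T(u)^2) >= 0,
   while W is nondecreasing in n because d(phi)/dn = b1 > 0 and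
   sqrt(phi^2 + E^2) >= |phi|; hence u = K/W, and with it F, is nonincreasing
   in n.  The hypotheses on (q, n) are what keep W and T away from 0: for
   q <> 1, T vanishes only on the curve n = l(q), and for q > 1 only where
   moreover (1-R) l(q) < (1-R) m(q). *)

From Stdlib Require Import Reals Lra ClassicalEpsilon.
From Coquelicot Require Import Coquelicot.
Open Scope R_scope.

Lemma continuous_pow {U : UniformSpace} (f : U -> R) (x : U) (k : nat) :
  continuous f x -> continuous (fun y => f y ^ k) x.
Proof.
  intros Hf; induction k as [|k IH]; simpl.
  - apply continuous_const.
  - exact (continuous_mult f (fun y => f y ^ k) x Hf IH).
Qed.

Lemma continuous_pos_locally {U : UniformSpace} (f : U -> R) (x : U) :
  continuous f x -> 0 < f x -> locally x (fun y => 0 < f y).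
Proof.
  intros Hf Hx.
  assert (Hball := Hf (ball (f x) (mkposreal _ Hx)) (locally_ball _ _)).
  unfold filtermap in Hball; revert Hball.
  apply filter_imp; intros y Hy.
  change (Rabs (f y - f x) < f x) in Hy.
  generalize (Rabs_maj2 (f y - f x)); lra.
Qed.

Lemma continuous_neq0_locally {U : UniformSpace} (f : U -> R) (x : U) :
  continuous f x -> f x <> 0 -> locally x (fun y => f y <> 0).
Proof.
  intros Hf Hx.
  assert (Habs : continuous (fun y => Rabs (f y)) x)
    by exact (continuous_comp f Rabs x Hf (continuous_Rabs _)).
  generalize (continuous_pos_locally _ _ Habs (Rabs_pos_lt _ Hx)).
  apply filter_imp; intros y Hy Hy0; rewrite Hy0, Rabs_R0 in Hy; lra.
Qed.

Ltac solve_continuous :=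
  repeat match goal with
  | |- continuous (fun p => p) _ => apply continuous_id
  | |- continuous (fun p => fst p) _ => apply continuous_fst
  | |- continuous (fun p => snd p) _ => apply continuous_snd
  | |- continuous (fun _ => ?c) _ => apply continuous_const
  | |- continuous (fun p => @?f p + @?g p) _ => apply (continuous_plus f g)
  | |- continuous (fun p => @?f p - @?g p) _ => apply (continuous_minus f g)
  | |- continuous (fun p => @?f p * @?g p) _ => apply (continuous_mult f g)
  | |- continuous (fun p => @?f p ^ ?k) _ => apply (continuous_pow f _ k)
  | |- continuous (fun p => sqrt (@?f p)) _ =>
      apply (continuous_comp f sqrt); [|apply continuous_sqrt]
  end.

Lemma sgn_cases (x : R) : x <> 0 -> (0 < x /\ sgn x = 1) \/ (x < 0 /\ sgn x = -1).
Proof.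
  intros Hx; unfold sgn.
  destruct (Rlt_dec 0 x); [left; lra|].
  destruct (Rlt_dec x 0); [right; lra|lra].
Qed.

Lemma sgn_mul_le_abs (x y : R) : sgn x * y <= Rabs y.
Proof.
  unfold sgn.
  destruct (Rlt_dec 0 x); [|destruct (Rlt_dec x 0)].
  - rewrite Rmult_1_l; apply Rle_abs.
  - generalize (Rabs_maj2 y); lra.
  - generalize (Rabs_pos y); lra.
Qed.

Definition root_fun Rp b1 b2 b3 q n : R :=
  sqrt (phi_fun Rp b1 b2 b3 q n ^ 2 + E2_fun Rp b2 q).

Definition W_fun Rp b1 b2 b3 q n : R :=
  phi_fun Rp b1 b2 b3 q n - sgn (1 - Rp) * root_fun Rp b1 b2 b3 q n.

Definition E2_coef Rp b2 : R := 4 * Rp ^ 2 * (1 - Rp) ^ 2 * (b2 - 1).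

Definition u_fun Rp b1 b2 b3 q n : R := E2_coef Rp b2 / W_fun Rp b1 b2 b3 q n.

Definition A_fun Rp q : R := 2 * (1 - Rp) * (1 - q) * ((1 - Rp) * q + Rp).

Definition T_fun Rp q v : R := 2 * (1 - Rp) * ((1 - Rp) * q + Rp) + (1 - q) * v.

Definition g_fun Rp q v : R :=
  (1 - Rp) * (2 * Rp * (1 - Rp) + v) / (Rp * T_fun Rp q v).

Definition G_fun Rp b1 b2 b3 q n : R := g_fun Rp q (u_fun Rp b1 b2 b3 q n).

Section Algebra.

Variables Rp b1 b2 b3 : R.
Hypothesis Rp_neq1 : Rp <> 1.
Hypothesis b2_ge1 : 1 <= b2.

Local Notation phi := (phi_fun Rp b1 b2 b3).
Local Notation E2 := (E2_fun Rp b2).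
Local Notation root := (root_fun Rp b1 b2 b3).
Local Notation W := (W_fun Rp b1 b2 b3).
Local Notation s := (sgn (1 - Rp)).

Lemma E2_fun_eq q : E2 q = E2_coef Rp b2 * (1 - q) ^ 2.
Proof. unfold E2_fun, E2_coef; ring. Qed.

Lemma E2_coef_ge0 : 0 <= E2_coef Rp b2.
Proof.
  unfold E2_coef.
  assert (0 <= Rp ^ 2 * (1 - Rp) ^ 2) by (apply Rmult_le_pos; apply pow2_ge_0).
  nra.
Qed.

Lemma E2_fun_ge0 q : 0 <= E2 q.
Proof.
  rewrite E2_fun_eq; apply Rmult_le_pos; [apply E2_coef_ge0|apply pow2_ge_0].
Qed.

Lemma root_fun_sqr q n : root q n ^ 2 = phi q n ^ 2 + E2 q.
Proof.
  unfold root_fun; rewrite <- Rsqr_pow2; apply Rsqr_sqrt.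
  generalize (pow2_ge_0 (phi q n)) (E2_fun_ge0 q); lra.
Qed.

Lemma root_fun_ge_abs q n : Rabs (phi q n) <= root q n.
Proof.
  unfold root_fun; rewrite <- sqrt_Rsqr_abs, Rsqr_pow2.
  apply sqrt_le_1_alt; generalize (E2_fun_ge0 q); lra.
Qed.

Lemma root_fun_gt_abs q n : 0 < E2 q -> Rabs (phi q n) < root q n.
Proof.
  intros HE; unfold root_fun; rewrite <- sqrt_Rsqr_abs, Rsqr_pow2.
  apply sqrt_lt_1_alt; split; [apply pow2_ge_0|lra].
Qed.

Lemma sgn_phi_le_root q n : s * phi q n <= root q n.
Proof. exact (Rle_trans _ _ _ (sgn_mul_le_abs _ _) (root_fun_ge_abs q n)). Qed.

Lemma sgn_mul_W_fun_neg q n :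
  0 < E2 q \/ s * phi q n < 0 -> s * W q n < 0.
Proof.
  intros Hcase.
  replace (s * W q n) with (s * phi q n - root q n)
    by (unfold W_fun; destruct (sgn_cases (1 - Rp)) as [[_ ->]|[_ ->]]; [lra|ring|ring]).
  destruct Hcase as [HE|Hneg].
  - generalize (sgn_mul_le_abs (1 - Rp) (phi q n)) (root_fun_gt_abs q n HE); lra.
  - generalize (Rabs_pos (phi q n)) (root_fun_ge_abs q n); lra.
Qed.

Lemma W_fun_conj q n : W q n * (- phi q n - s * root q n) = E2 q.
Proof.
  transitivity (s ^ 2 * root q n ^ 2 - phi q n ^ 2); [unfold W_fun; ring|].
  rewrite root_fun_sqr.
  destruct (sgn_cases (1 - Rp)) as [[_ ->]|[_ ->]]; [lra|ring|ring].
Qed.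

(* [A_fun - phi - s * root] is the inner denominator of [O_fun]. *)
Lemma denominator_eq q n : W q n <> 0 ->
  A_fun Rp q - phi q n - s * root q n = (1 - q) * T_fun Rp q (u_fun Rp b1 b2 b3 q n).
Proof.
  intros HW.
  assert (Hconj : - phi q n - s * root q n = E2 q / W q n).
  { rewrite <- (W_fun_conj q n); field; exact HW. }
  unfold A_fun, T_fun, u_fun.
  replace (2 * (1 - Rp) * (1 - q) * ((1 - Rp) * q + Rp) - phi q n - s * root q n)
    with (2 * (1 - Rp) * (1 - q) * ((1 - Rp) * q + Rp) + (- phi q n - s * root q n)) by ring.
  rewrite Hconj, E2_fun_eq; field; exact HW.
Qed.

Lemma F_raw_eq_G_fun q n : Rp <> 0 -> q <> 1 -> n <> 0 -> W q n <> 0 ->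
  T_fun Rp q (u_fun Rp b1 b2 b3 q n) <> 0 ->
  F_raw Rp b1 b2 b3 q n = G_fun Rp b1 b2 b3 q n.
Proof.
  intros HRp0 Hq Hn HW HT.
  unfold F_raw, O_fun; fold (root_fun Rp b1 b2 b3 q n).
  change (2 * (1 - Rp) * (1 - q) * ((1 - Rp) * q + Rp)) with (A_fun Rp q).
  rewrite denominator_eq by exact HW.
  unfold G_fun, g_fun; unfold T_fun in *.
  field; repeat split; lra.
Qed.

End Algebra.

Definition off_S Rp b1 b2 b3 (p : R * R) : Prop :=
  in_dom (fst p) (snd p) /\ ~ in_S Rp b1 b2 b3 (fst p) (snd p).

Section Extension.

Variables Rp b1 b2 b3 q n : R.
Hypothesis Rp_pos : 0 < Rp.
Hypothesis Rp_neq1 : Rp <> 1.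
Hypothesis b2_ge1 : 1 <= b2.
Hypothesis W_neq0 : W_fun Rp b1 b2 b3 q n <> 0.
Hypothesis T_neq0 : T_fun Rp q (u_fun Rp b1 b2 b3 q n) <> 0.

Local Notation lift f := (fun p : R * R => f (fst p) (snd p)).

Lemma continuous_W_fun : continuous (lift (W_fun Rp b1 b2 b3)) (q, n).
Proof. unfold W_fun, root_fun, phi_fun, E2_fun; solve_continuous. Qed.

Lemma continuous_u_fun : continuous (lift (u_fun Rp b1 b2 b3)) (q, n).
Proof.
  unfold u_fun, Rdiv.
  apply (continuous_mult (fun _ => E2_coef Rp b2)); [apply continuous_const|].
  apply (continuous_comp (lift (W_fun Rp b1 b2 b3)) Rinv).
  - exact continuous_W_fun.
  - exact (continuous_Rinv _ W_neq0).
Qed.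

Lemma continuous_T_fun :
  continuous (fun p : R * R => T_fun Rp (fst p) (u_fun Rp b1 b2 b3 (fst p) (snd p))) (q, n).
Proof.
  unfold T_fun.
  apply (continuous_plus (fun p : R * R => 2 * (1 - Rp) * ((1 - Rp) * fst p + Rp)));
    [solve_continuous|].
  apply (continuous_mult (fun p : R * R => 1 - fst p)); [solve_continuous|].
  exact continuous_u_fun.
Qed.

Lemma continuous_G_fun : continuous (lift (G_fun Rp b1 b2 b3)) (q, n).
Proof.
  unfold G_fun, g_fun, Rdiv.
  apply (continuous_mult
           (fun p : R * R => (1 - Rp) * (2 * Rp * (1 - Rp) + u_fun Rp b1 b2 b3 (fst p) (snd p)))).
  - apply (continuous_mult (fun _ => 1 - Rp)); [apply continuous_const|].
    apply (continuous_plus (fun _ => 2 * Rp * (1 - Rp))); [apply continuous_const|].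
    exact continuous_u_fun.
  - apply (continuous_comp
             (fun p : R * R => Rp * T_fun Rp (fst p) (u_fun Rp b1 b2 b3 (fst p) (snd p))) Rinv).
    + apply (continuous_mult (fun _ => Rp)); [apply continuous_const|exact continuous_T_fun].
    + apply continuous_Rinv; simpl; apply Rmult_integral_contrapositive; split; lra.
Qed.

Lemma F_fun_eq_G_fun :
  ProperFilter' (within (off_S Rp b1 b2 b3) (locally (q, n))) ->
  F_fun Rp b1 b2 b3 q n = G_fun Rp b1 b2 b3 q n.
Proof.
  intros Hproper.
  assert (Hnear : locally (q, n) (fun p : R * R =>
            W_fun Rp b1 b2 b3 (fst p) (snd p) <> 0 /\
            T_fun Rp (fst p) (u_fun Rp b1 b2 b3 (fst p) (snd p)) <> 0)).
  { apply filter_and.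
    - exact (continuous_neq0_locally _ _ continuous_W_fun W_neq0).
    - exact (continuous_neq0_locally _ _ continuous_T_fun T_neq0). }
  assert (Hlim : F_lim_at Rp b1 b2 b3 q n (G_fun Rp b1 b2 b3 q n)).
  { apply (filterlim_ext_loc (lift (G_fun Rp b1 b2 b3))).
    - unfold within; revert Hnear; apply filter_imp.
      intros [q' n'] [HW HT] [_ Hoff]; simpl in *.
      symmetry; apply F_raw_eq_G_fun; auto; [lra|intros ->..]; apply Hoff; unfold in_S; tauto.
    - apply (filterlim_filter_le_1 _ (filter_le_within _)).
      exact continuous_G_fun. }
  unfold F_fun.
  destruct (excluded_middle_informative (in_S Rp b1 b2 b3 q n)) as [HS|HS].
  - exact (filterlim_locally_unique (F := within (off_S Rp b1 b2 b3) (locally (q, n)))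
             _ _ _ (epsilon_spec _ _ (ex_intro _ _ Hlim)) Hlim).
  - apply F_raw_eq_G_fun; auto; [lra|intros ->..]; apply HS; unfold in_S; tauto.
Qed.

End Extension.

Section Monotonicity.

Variables Rp b1 b2 b3 q n : R.
Hypothesis Rp_pos : 0 < Rp.
Hypothesis b1_pos : 0 < b1.
Hypothesis b2_ge1 : 1 <= b2.
Hypothesis q_pos : 0 < q.
Hypothesis radicand_pos : 0 < phi_fun Rp b1 b2 b3 q n ^ 2 + E2_fun Rp b2 q.
Hypothesis W_neq0 : W_fun Rp b1 b2 b3 q n <> 0.
Hypothesis T_neq0 : T_fun Rp q (u_fun Rp b1 b2 b3 q n) <> 0.

Local Notation phi := (phi_fun Rp b1 b2 b3 q n).
Local Notation root := (root_fun Rp b1 b2 b3 q n).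
Local Notation W := (W_fun Rp b1 b2 b3 q n).
Local Notation s := (sgn (1 - Rp)).

Lemma root_fun_pos : 0 < root.
Proof. apply sqrt_lt_R0; exact radicand_pos. Qed.

Lemma is_derive_phi_fun : is_derive (phi_fun Rp b1 b2 b3 q) n b1.
Proof. unfold phi_fun; auto_derive; [exact I|ring]. Qed.

Lemma is_derive_root_fun : is_derive (root_fun Rp b1 b2 b3 q) n (b1 * phi / root).
Proof.
  assert (Hrad : is_derive (fun x => phi_fun Rp b1 b2 b3 q x ^ 2 + E2_fun Rp b2 q) n
                   (2 * phi * b1)).
  { unfold phi_fun; auto_derive; [exact I|ring]. }
  replace (b1 * phi / root) with (2 * phi * b1 / (2 * root))
    by (generalize root_fun_pos; intros; field; lra).
  exact (is_derive_sqrt _ _ _ Hrad radicand_pos).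
Qed.

Lemma is_derive_W_fun : is_derive (W_fun Rp b1 b2 b3 q) n (b1 * (root - s * phi) / root).
Proof.
  replace (b1 * (root - s * phi) / root) with (b1 - s * (b1 * phi / root))
    by (generalize root_fun_pos; intros; field; lra).
  exact (is_derive_minus _ _ _ _ _ is_derive_phi_fun (is_derive_scal _ _ s _ is_derive_root_fun)).
Qed.

Lemma is_derive_u_fun : is_derive (u_fun Rp b1 b2 b3 q) n
  (E2_coef Rp b2 * (- (b1 * (root - s * phi) / root) / W ^ 2)).
Proof. exact (is_derive_scal _ _ _ _ (is_derive_inv _ _ _ is_derive_W_fun W_neq0)). Qed.

Lemma is_derive_g_fun (v : R) : T_fun Rp q v <> 0 ->
  is_derive (g_fun Rp q) v (2 * (1 - Rp) ^ 2 * q / (Rp * T_fun Rp q v ^ 2)).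
Proof.
  intros HT; unfold g_fun; unfold T_fun in *.
  auto_derive.
  - apply Rmult_integral_contrapositive; split; lra.
  - field; split; lra.
Qed.

Lemma is_derive_G_fun_nonpos :
  exists d, is_derive (G_fun Rp b1 b2 b3 q) n d /\ d <= 0.
Proof.
  set (u := u_fun Rp b1 b2 b3 q n) in *.
  set (dW := b1 * (root - s * phi) / root).
  set (dg := 2 * (1 - Rp) ^ 2 * q / (Rp * T_fun Rp q u ^ 2)).
  exists (E2_coef Rp b2 * (- dW / W ^ 2) * dg); split.
  - exact (is_derive_comp _ _ _ _ _ (is_derive_g_fun u T_neq0) is_derive_u_fun).
  - assert (HdW : 0 <= dW).
    { generalize root_fun_pos (sgn_phi_le_root Rp b1 b2 b3 b2_ge1 q n); intros.
      apply Rmult_le_pos; [nra|left; apply Rinv_0_lt_compat; lra]. }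
    assert (HW2 : 0 < W ^ 2) by (apply pow2_gt_0; exact W_neq0).
    assert (Hdg : 0 <= dg).
    { unfold dg; apply Rmult_le_pos.
      - generalize (pow2_ge_0 (1 - Rp)); nra.
      - left; apply Rinv_0_lt_compat, Rmult_lt_0_compat; [lra|apply pow2_gt_0; exact T_neq0]. }
    assert (HdWW : 0 <= dW / W ^ 2)
      by (apply Rmult_le_pos; [lra|left; apply Rinv_0_lt_compat; lra]).
    assert (HK := E2_coef_ge0 Rp b2 b2_ge1).
    replace (E2_coef Rp b2 * (- dW / W ^ 2) * dg) with (- (E2_coef Rp b2 * (dW / W ^ 2) * dg))
      by (unfold Rdiv; ring).
    enough (0 <= E2_coef Rp b2 * (dW / W ^ 2) * dg) by lra.
    apply Rmult_le_pos; [apply Rmult_le_pos|]; assumption.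
Qed.

End Monotonicity.

Lemma locally_affine_pos (c a x : R) : 0 < c * x + a -> locally x (fun y => 0 < c * y + a).
Proof.
  intros Hx; apply (continuous_pos_locally (fun y => c * y + a)); [solve_continuous|exact Hx].
Qed.

Definition region Rp b1 b2 b3 q n : Prop :=
  (0 < q <= 1 /\
    (1 - Rp) * m_fun Rp b1 b3 q < (1 - Rp) * n /\
    (1 - Rp) * n < (1 - Rp) * l_fun Rp b1 b2 b3 q)
  \/ (1 < q /\ (1 - Rp) * m_fun Rp b1 b3 q < (1 - Rp) * n).

Section Region.

Variables Rp b1 b2 b3 : R.
Hypothesis Rp_pos : 0 < Rp.
Hypothesis Rp_neq1 : Rp <> 1.
Hypothesis b1_pos : 0 < b1.
Hypothesis b2_gt1 : 1 < b2.

Local Notation phi := (phi_fun Rp b1 b2 b3).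
Local Notation E2 := (E2_fun Rp b2).
Local Notation root := (root_fun Rp b1 b2 b3).
Local Notation W := (W_fun Rp b1 b2 b3).
Local Notation s := (sgn (1 - Rp)).
Local Notation l := (l_fun Rp b1 b2 b3).
Local Notation m := (m_fun Rp b1 b3).

Lemma E2_fun_pos q : q <> 1 -> 0 < E2 q.
Proof.
  intros Hq; rewrite E2_fun_eq; unfold E2_coef.
  assert (0 < Rp ^ 2 * (1 - Rp) ^ 2 * (1 - q) ^ 2).
  { generalize (pow2_gt_0 Rp) (pow2_gt_0 (1 - Rp)) (pow2_gt_0 (1 - q)); intros.
    apply Rmult_lt_0_compat; [apply Rmult_lt_0_compat|]; lra. }
  nra.
Qed.

Lemma l_fun_identity q n : q <> 1 -> (1 - Rp) * q + Rp <> 0 ->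
  b1 * (n - l q) * (2 * A_fun Rp q)
  = 2 * A_fun Rp q * phi q n - (A_fun Rp q ^ 2 - E2 q).
Proof.
  intros Hq HP; unfold A_fun, l_fun, m_fun, phi_fun, E2_fun.
  field; repeat split; lra.
Qed.

(* Squaring [s * root = A - phi] gives [E2 = A (A - 2 phi)], which by
   [l_fun_identity] forces [n = l q]; [root >= |phi|] fixes the sign of [A]. *)
Lemma denominator_zero q n : q <> 1 ->
  A_fun Rp q - phi q n - s * root q n = 0 ->
  n = l q /\ 0 < (1 - q) * ((1 - Rp) * q + Rp).
Proof.
  intros Hq Hzero.
  assert (HE := E2_fun_pos q Hq).
  assert (Hsq : A_fun Rp q ^ 2 - 2 * A_fun Rp q * phi q n = E2 q).
  { assert (Hroot := root_fun_sqr Rp b1 b2 b3 (Rlt_le _ _ b2_gt1) q n).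
    destruct (sgn_cases (1 - Rp)) as [[_ Hs]|[_ Hs]]; [lra| |]; rewrite Hs in Hzero.
    - replace (root q n) with (A_fun Rp q - phi q n) in Hroot by lra; nra.
    - replace (root q n) with (phi q n - A_fun Rp q) in Hroot by lra; nra. }
  assert (HA : A_fun Rp q <> 0) by (intros HA; rewrite HA in Hsq; lra).
  assert (HP : (1 - Rp) * q + Rp <> 0) by (intros HP; apply HA; unfold A_fun; rewrite HP; ring).
  split.
  - assert (Hprod : b1 * (n - l q) * (2 * A_fun Rp q) = 0)
      by (rewrite l_fun_identity by assumption; lra).
    apply Rmult_integral in Hprod as [Hprod|]; [|lra].
    apply Rmult_integral in Hprod as [|]; lra.
  - assert (Hge := root_fun_ge_abs Rp b1 b2 b3 (Rlt_le _ _ b2_gt1) q n).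
    assert (HA' : A_fun Rp q = 2 * (1 - Rp) * ((1 - q) * ((1 - Rp) * q + Rp)))
      by (unfold A_fun; ring).
    destruct (sgn_cases (1 - Rp)) as [[H1 Hs]|[H1 Hs]]; [lra| |]; rewrite Hs in Hzero.
    + assert (HApos : 0 < A_fun Rp q).
      { apply Rdichotomy in HA as [HA|HA]; [|exact HA].
        generalize (Rabs_maj2 (phi q n)); lra. }
      rewrite HA' in HApos; nra.
    + assert (HAneg : A_fun Rp q < 0).
      { apply Rdichotomy in HA as [HA|HA]; [exact HA|].
        generalize (Rle_abs (phi q n)); lra. }
      rewrite HA' in HAneg; nra.
Qed.

Lemma phi_fun_at_1 n : phi 1 n = b1 * (n - l 1).
Proof. unfold phi_fun, l_fun, m_fun; field; lra. Qed.

Lemma scaled_l_lt_m q : 1 < q -> (1 - Rp) * q + Rp < 0 -> (1 - Rp) * l q < (1 - Rp) * m q.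
Proof.
  intros Hq HP.
  assert (Hdiff : (1 - Rp) * l q - (1 - Rp) * m q
                  = (1 - Rp) ^ 2 * q / b1 * ((1 - q) + (b2 - 1) * Rp / ((1 - Rp) * q + Rp)))
    by (unfold l_fun; field; split; lra).
  assert (Hfactor : 0 < (1 - Rp) ^ 2 * q / b1).
  { apply Rdiv_lt_0_compat; [apply Rmult_lt_0_compat; [apply pow2_gt_0|]|]; lra. }
  assert (Hfrac : (b2 - 1) * Rp / ((1 - Rp) * q + Rp) < 0)
    by (apply Rdiv_pos_neg; [apply Rmult_lt_0_compat|]; lra).
  assert (Hbracket : (1 - q) + (b2 - 1) * Rp / ((1 - Rp) * q + Rp) < 0) by lra.
  nra.
Qed.

Lemma region_nondegenerate q n : region Rp b1 b2 b3 q n ->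
  0 < phi q n ^ 2 + E2 q /\ W q n <> 0 /\ T_fun Rp q (u_fun Rp b1 b2 b3 q n) <> 0.
Proof.
  intros Hreg.
  assert (W_neq0 : s * W q n < 0 -> W q n <> 0) by (intros H HW; rewrite HW in H; lra).
  destruct (Req_dec q 1) as [->|Hq].
  - assert (Hl : (1 - Rp) * n < (1 - Rp) * l 1) by (destruct Hreg as [[_ [_ H]]|[H _]]; lra).
    assert (Hsphi : s * phi 1 n < 0).
    { rewrite phi_fun_at_1.
      destruct (sgn_cases (1 - Rp)) as [[H1 ->]|[H1 ->]]; [lra| |]; nra. }
    assert (HE : E2 1 = 0) by (unfold E2_fun; ring).
    split; [|split].
    + rewrite HE, Rplus_0_r; apply pow2_gt_0; intros H0; rewrite H0 in Hsphi; lra.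
    + apply W_neq0, (sgn_mul_W_fun_neg Rp b1 b2 b3 Rp_neq1 (Rlt_le _ _ b2_gt1)); right; exact Hsphi.
    + unfold T_fun; intros HT; ring_simplify in HT; lra.
  - assert (HE := E2_fun_pos q Hq).
    assert (HW : W q n <> 0).
    { apply W_neq0, (sgn_mul_W_fun_neg Rp b1 b2 b3 Rp_neq1 (Rlt_le _ _ b2_gt1)); left; exact HE. }
    split; [generalize (pow2_ge_0 (phi q n)); lra|split; [exact HW|]].
    intros HT.
    assert (Hzero := denominator_eq Rp b1 b2 b3 Rp_neq1 (Rlt_le _ _ b2_gt1) q n HW).
    rewrite HT, Rmult_0_r in Hzero.
    destruct (denominator_zero q n Hq Hzero) as [Hn HP].
    destruct Hreg as [[_ [_ Hl]]|[Hq1 Hm]]; [rewrite Hn in Hl; lra|].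
    assert (HPneg : (1 - Rp) * q + Rp < 0) by nra.
    generalize (scaled_l_lt_m q Hq1 HPneg); rewrite Hn in Hm; lra.
Qed.

Lemma region_locally q n : region Rp b1 b2 b3 q n -> locally n (region Rp b1 b2 b3 q).
Proof.
  assert (Habove : forall a, a < (1 - Rp) * n -> locally n (fun y => a < (1 - Rp) * y)).
  { intros a Ha; generalize (locally_affine_pos (1 - Rp) (- a) n ltac:(lra)).
    apply filter_imp; intros; lra. }
  assert (Hbelow : forall a, (1 - Rp) * n < a -> locally n (fun y => (1 - Rp) * y < a)).
  { intros a Ha; generalize (locally_affine_pos (- (1 - Rp)) a n ltac:(lra)).
    apply filter_imp; intros; lra. }
  intros [[Hq [Hm Hl]]|[Hq Hm]].
  - generalize (filter_and _ _ (Habove _ Hm) (Hbelow _ Hl)).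
    apply filter_imp; intros y Hy; left; tauto.
  - generalize (Habove _ Hm); apply filter_imp; intros y Hy; right; tauto.
Qed.

(* Points of the region are limits of points off [S]: move [n] alone when [q]
   is regular, and move both coordinates up when [q] is one of the poles
   [1] or [Rp / (Rp - 1)], both of which are [>= 1] in the region. *)
Lemma region_near_off_S q n (eps : posreal) : region Rp b1 b2 b3 q n -> 0 <= n ->
  exists q' n', Rabs (q' - q) < eps /\ Rabs (n' - n) < eps /\ off_S Rp b1 b2 b3 (q', n').
Proof.
  intros Hreg Hn.
  assert (Heps := cond_pos eps).
  assert (Hq0 : 0 < q) by (destruct Hreg as [[H _]|[H _]]; lra).
  destruct (classic (q = 1 \/ q = Rp / (Rp - 1))) as [Hpole|Hregular].
  - assert (Hq1 : 1 <= q).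
    { destruct Hpole as [->|Hpole]; [lra|].
      assert (Hq' : q * (Rp - 1) = Rp) by (rewrite Hpole; field; lra).
      nra. }
    assert (Ht : exists t, 0 < t < eps /\ q + t <> Rp / (Rp - 1)).
    { destruct (Req_dec (q + eps / 2) (Rp / (Rp - 1))).
      - exists (eps / 4); split; lra.
      - exists (eps / 2); split; [lra|assumption]. }
    destruct Ht as [t [Ht Hpole']].
    exists (q + t), (n + t).
    split; [rewrite Rabs_pos_eq; lra|].
    split; [rewrite Rabs_pos_eq; lra|].
    split; [unfold in_dom; simpl; lra|].
    unfold in_S; simpl; intros [H|[H|[H|[H _]]]]; lra.
  - destruct (region_locally q n Hreg) as [delta Hdelta].
    set (t := Rmin eps delta / 2).
    assert (Ht : 0 < t /\ t < eps /\ t < delta).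
    { generalize (Rmin_l eps delta) (Rmin_r eps delta)
        (Rmin_pos eps delta (cond_pos eps) (cond_pos delta)).
      unfold t; lra. }
    assert (Hreg' : region Rp b1 b2 b3 q (n + t)).
    { apply Hdelta; change (Rabs (n + t - n) < delta); rewrite Rabs_pos_eq; lra. }
    exists q, (n + t).
    split; [rewrite Rminus_diag, Rabs_R0; lra|].
    split; [rewrite Rabs_pos_eq; lra|].
    split; [unfold in_dom; simpl; lra|].
    unfold in_S; simpl; intros [H|[H|[H|[H1 H2]]]]; [tauto|tauto|lra|].
    destruct Hreg' as [[_ [_ Hl]]|[Hq _]]; lra.
Qed.

Lemma region_off_S_proper q n : region Rp b1 b2 b3 q n -> 0 <= n ->
  ProperFilter' (within (off_S Rp b1 b2 b3) (locally (q, n))).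
Proof.
  intros Hreg Hn.
  split; [|apply within_filter, locally_filter].
  intros [eps Heps].
  destruct (region_near_off_S q n eps Hreg Hn) as [q' [n' [Hq' [Hn' Hoff]]]].
  apply (Heps (q', n')); [split; assumption|exact Hoff].
Qed.

End Region.

Lemma is_partial_n_of_is_derive (f : R -> R -> R) (g : R -> R) (q n d : R) :
  0 <= n -> locally n (fun y => 0 <= y -> f q y = g y) -> is_derive g n d ->
  is_partial_n f q n d.
Proof.
  intros Hn [delta Hfg] Hg P [eps HP].
  apply is_derive_Reals in Hg.
  destruct (Hg eps (cond_pos eps)) as [delta' Hdelta'].
  assert (Hmin : 0 < Rmin delta delta') by (apply Rmin_pos; apply cond_pos).
  exists (mkposreal _ Hmin); intros y Hy [Hy0 Hyn]; apply HP.
  change (Rabs (y - n) < Rmin delta delta') in Hy.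
  generalize (Rmin_l delta delta') (Rmin_r delta delta'); intros.
  assert (Hy_delta : ball n delta y) by (change (Rabs (y - n) < delta); lra).
  change (Rabs ((f q y - f q n) / (y - n) - d) < eps).
  rewrite (Hfg y Hy_delta Hy0), (Hfg n (ball_center n delta) Hn).
  replace y with (n + (y - n)) at 1 by ring.
  apply Hdelta'; lra.
Qed.

Theorem lemmaE3 (Rp b1 b2 b3 : R) :
  0 < Rp -> Rp <> 1 -> 0 < b1 -> 1 < b2 -> 0 < b3 ->
  forall q n : R, 0 <= n ->
  ((0 < q <= 1 /\
    (1 - Rp) * m_fun Rp b1 b3 q < (1 - Rp) * n /\
    (1 - Rp) * n < (1 - Rp) * l_fun Rp b1 b2 b3 q)
   \/
   (1 < q /\ (1 - Rp) * m_fun Rp b1 b3 q < (1 - Rp) * n)) ->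
  exists d : R, is_partial_n (F_fun Rp b1 b2 b3) q n d /\ d <= 0.
Proof.
  intros HRp HRp1 Hb1 Hb2 _ q n Hn Hreg.
  assert (Hq : 0 < q) by (destruct Hreg as [[H _]|[H _]]; lra).
  assert (HF_G : locally n (fun y => 0 <= y -> F_fun Rp b1 b2 b3 q y = G_fun Rp b1 b2 b3 q y)).
  { generalize (region_locally Rp b1 b2 b3 q n Hreg); apply filter_imp; intros y Hy Hy0.
    destruct (region_nondegenerate Rp b1 b2 b3 HRp HRp1 Hb1 Hb2 q y Hy) as [_ [HW HT]].
    apply (F_fun_eq_G_fun Rp b1 b2 b3 q y HRp HRp1 (Rlt_le _ _ Hb2) HW HT).
    exact (region_off_S_proper Rp b1 b2 b3 HRp HRp1 q y Hy Hy0). }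
  destruct (region_nondegenerate Rp b1 b2 b3 HRp HRp1 Hb1 Hb2 q n Hreg) as [Hrad [HW HT]].
  destruct (is_derive_G_fun_nonpos Rp b1 b2 b3 q n HRp Hb1 (Rlt_le _ _ Hb2) Hq Hrad HW HT)
    as [d [Hd Hd0]].
  exists d; split; [exact (is_partial_n_of_is_derive _ _ q n d Hn HF_G Hd)|exact Hd0].
Qed.
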